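(* Let $X$ be as in the context. If $\liminf_{x\to\infty}H_1(x)>1$, then $X$ is transient.
   Context: Let $\mathbb S\subseteq\mathbb Z_{\ge0}$ be an infinite set and let $X$ be an irreducible continuous-time Markov chain on $\mathbb S$ whose generator acts on functions $f:\mathbb S\to\mathbb R$ by $\mathcal A f(x)=\sum_{\eta\in\mathbb Z}\lambda_\eta(x)\big(f(x+\eta)-f(x)\big)$, where $\lambda_\eta(x)$ is the rate of the jump $x\to x+\eta$ (and $\lambda_\eta(x)=0$ whenever $x+\eta\notin\mathbb S$). Standing assumption: (a) there is a finite set $\Gamma\subset\mathbb Z$ such that $\lambda_\eta\equiv0$ for $\eta\notin\Gamma$; (b) $0\le\lambda_\eta(x)<\infty$ for all $x,\eta$. Define $m(x)=\sum_{\eta}\eta\,\lambda_\eta(x)$, $v(x)=\frac12\sum_\eta\eta^2\lambda_\eta(x)$ (positive on $\mathbb S$), and for $x>1$, $H_1(x)=\dfrac{(\log x)(m(x)x-v(x))}{v(x)}$. *)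

From Stdlib Require Import Reals ZArith List Lra.
From Coquelicot Require Import Coquelicot.
Open Scope R_scope.

(* States are integers; the state space S is a predicate on Z contained in Z_{>=0}.
   Rates: lam eta x = rate of the jump x -> x + eta.
   Gamma : list Z is a finite (duplicate-free) list outside of which all rates vanish. *)

Fixpoint sumL (l : list Z) (f : Z -> R) : R :=
  match l with nil => 0 | cons e l' => f e + sumL l' f end.

Definition drift (Gamma : list Z) (lam : Z -> Z -> R) (x : Z) : R :=
  sumL Gamma (fun eta => IZR eta * lam eta x).

Definition halfvar (Gamma : list Z) (lam : Z -> Z -> R) (x : Z) : R :=
  / 2 * sumL Gamma (fun eta => (IZR eta) ^ 2 * lam eta x).

Definition H1 (Gamma : list Z) (lam : Z -> Z -> R) (x : Z) : R :=
  ln (IZR x) * (drift Gamma lam x * IZR x - halfvar Gamma lam x) / halfvar Gamma lam x.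

Definition qrate (Gamma : list Z) (lam : Z -> Z -> R) (x : Z) : R :=
  sumL Gamma (fun eta => if Z.eq_dec eta 0 then 0 else lam eta x).

(* hitF n y = probability that the embedded jump chain started at y visits
   the target state x at some step in {1,...,n}.  Transition probabilities of
   the jump chain: P(y, y+eta) = lam eta y / q(y), eta <> 0. *)
Fixpoint hitF (Gamma : list Z) (lam : Z -> Z -> R) (x : Z) (n : nat) (y : Z) : R :=
  match n with
  | O => 0
  | S n' =>
      sumL Gamma (fun eta =>
        if Z.eq_dec eta 0 then 0 else
        lam eta y / qrate Gamma lam y *
        (if Z.eq_dec (y + eta)%Z x then 1 else hitF Gamma lam x n' (y + eta)%Z))
  end.

Definition return_prob (Gamma : list Z) (lam : Z -> Z -> R) (x : Z) : Rbar :=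
  Lim_seq (fun n => hitF Gamma lam x n x).

Definition transient (S : Z -> Prop) (Gamma : list Z) (lam : Z -> Z -> R) : Prop :=
  forall x, S x -> Rbar_lt (return_prob Gamma lam x) (Finite 1).

Inductive reach (lam : Z -> Z -> R) (x : Z) : Z -> Prop :=
  | reach_refl : reach lam x x
  | reach_step : forall y eta, reach lam x y -> eta <> 0%Z -> 0 < lam eta y ->
                   reach lam x (y + eta)%Z.

Definition irreducible (S : Z -> Prop) (lam : Z -> Z -> R) : Prop :=
  forall x y, S x -> S y -> reach lam x y.

(* Transience via the Lyapunov function f(y) = 1 / ln ln y, which decreases to 0.  A
   second-order expansion of f(y + e) - f(y) shows that, up to a positive factor, the generator
   applied to f at y is at most v(y) (1 + o(1) - H_1(y)), hence nonpositive for large y once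
   H_1(y) >= c > 1.  So f, frozen below a threshold, is superharmonic for the jump
   chain far out, and from a far state y the chain visits a given state x below level M with
   probability at most f(y) / f(M) < 1.  By irreducibility the chain started at x reaches y with
   positive probability without returning to x, so the return probability of x is < 1. *)
From Stdlib Require Import Reals ZArith List Lra Psatz Classical.
From Coquelicot Require Import Coquelicot.
Open Scope R_scope.

Lemma ln_1p_le (u : R) : -1 < u -> ln (1 + u) <= u.
Proof.
  intro Hu. rewrite <- (ln_exp u) at 2. apply ln_le; [lra | apply exp_ineq1_le].
Qed.

Lemma ln_1p_ge_nonneg (u : R) : 0 <= u -> u - u^2/2 <= ln (1 + u).
Proof.
  intro Hu. destruct (Req_dec u 0) as [->|Hu0].
  { rewrite Rplus_0_r, ln_1. lra. }
  set (h := fun t => ln (1 + t) - t + t^2/2).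
  destruct (MVT_cor2 h (fun t => / (1 + t) - 1 + t) 0 u) as [c [Hc Hcu]]; [lra| |].
  { intros c Hc. apply is_derive_Reals. unfold h. auto_derive; [lra | field; lra]. }
  unfold h in Hc. rewrite Rplus_0_r, ln_1 in Hc.
  assert (0 < / (1 + c) - 1 + c).
  { replace (/ (1 + c) - 1 + c) with (c^2 / (1 + c)) by (field; lra).
    apply Rdiv_lt_0_compat; nra. }
  nra.
Qed.

Lemma ln_1p_ge_nonpos (u : R) : -1/2 <= u <= 0 -> u - u^2/2 + u^3 <= ln (1 + u).
Proof.
  intro Hu. destruct (Req_dec u 0) as [->|Hu0].
  { rewrite Rplus_0_r, ln_1. lra. }
  set (h := fun t => ln (1 + t) - t + t^2/2 - t^3).
  destruct (MVT_cor2 h (fun t => / (1 + t) - 1 + t - 3 * t^2) u 0) as [c [Hc Hcu]]; [lra| |].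
  { intros c Hc. apply is_derive_Reals. unfold h. auto_derive; [lra | field; lra]. }
  unfold h in Hc. rewrite Rplus_0_r, ln_1 in Hc.
  assert (/ (1 + c) - 1 + c - 3 * c^2 < 0).
  { replace (/ (1 + c) - 1 + c - 3 * c^2) with (- (c^2 * (2 + 3 * c) / (1 + c)))
      by (field; lra).
    assert (0 < c^2 * (2 + 3 * c) / (1 + c)) by (apply Rdiv_lt_0_compat; nra).
    lra. }
  nra.
Qed.

Lemma ln_1p_bounds (u k : R) : 0 <= k <= 1/2 -> -k <= u <= k ->
  u - u^2 * (1/2 + k) <= ln (1 + u) <= u /\ ln (1 + u)^2 <= u^2 * (1 + k)^2.
Proof.
  intros Hk Hu.
  assert (Hup : ln (1 + u) <= u) by (apply ln_1p_le; lra).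
  assert (Hlo : u - u^2 * (1/2 + k) <= ln (1 + u)).
  { destruct (Rle_dec 0 u) as [Hu0|Hu0].
    - pose proof (ln_1p_ge_nonneg u Hu0). nra.
    - pose proof (ln_1p_ge_nonpos u ltac:(lra)). nra. }
  split; [lra|].
  destruct (Rle_dec 0 u).
  - assert (0 <= ln (1 + u)) by nra. nra.
  - assert (ln (1 + u) < 0) by lra. assert (- ln (1 + u) <= - u * (1 + k)) by nra. nra.
Qed.

Lemma inv_add_ln_1p_le (Lam r k : R) : 1 <= Lam -> 0 <= k <= 1/4 -> -k <= r <= k ->
  / (Lam + ln (1 + r)) - / Lam <= (- r + r^2 * (1/2 + k)) / Lam^2 + 8 * r^2 / Lam^3.
Proof.
  intros HLam Hk Hr.
  destruct (ln_1p_bounds r k ltac:(lra) Hr) as [[Hlo Hup] Hsq].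
  set (w := ln (1 + r)) in *.
  assert (Hw2 : w^2 <= 4 * r^2) by nra.
  assert (HD : Lam / 2 <= Lam + w) by nra.
  replace (/ (Lam + w) - / Lam) with (- w / Lam^2 + w^2 / ((Lam + w) * Lam^2))
    by (field; lra).
  apply Rplus_le_compat.
  - unfold Rdiv. apply Rmult_le_compat_r; [left; apply Rinv_0_lt_compat; nra | lra].
  - apply Rle_trans with (4 * r^2 / (Lam / 2 * Lam^2)); [|right; field; lra].
    unfold Rdiv. apply Rmult_le_compat; [nra | left; apply Rinv_0_lt_compat; nra | exact Hw2 |].
    apply Rinv_le_contravar; nra.
Qed.

Definition lnln_quad_coef (L Lam k : R) : R :=
  (1/2 + k) / (L * Lam^2) + (1/2 + 2 * k) * (1 + k)^2 / (L^2 * Lam^2)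
  + 8 * (1 + k)^2 / (L^2 * Lam^3).

(* Apply [inv_add_ln_1p_le] to [ln (ln (y (1 + u))) = ln (ln y) + ln (1 + ln (1 + u) / ln y)]. *)
Lemma inv_lnln_mul_1p_le (y u k : R) :
  0 < y -> 1 <= ln y -> 1 <= ln (ln y) -> 0 <= k <= 1/8 -> -k <= u <= k ->
  / ln (ln (y * (1 + u))) - / ln (ln y)
  <= - u / (ln y * ln (ln y)^2) + u^2 * lnln_quad_coef (ln y) (ln (ln y)) k.
Proof.
  intros Hy HL HLam Hk Hu.
  set (L := ln y) in *. set (Lam := ln L) in *.
  destruct (ln_1p_bounds u k ltac:(lra) Hu) as [[Hlo Hup] Hsq].
  set (l := ln (1 + u)) in *.
  set (r := l / L).
  assert (Hr : -2 * k <= r <= 2 * k).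
  { assert (Hl : -2 * k <= l <= 2 * k) by nra.
    assert (0 < / L <= 1) by (split; [apply Rinv_0_lt_compat | rewrite <- Rinv_1;
      apply Rinv_le_contravar]; lra).
    unfold r, Rdiv. nra. }
  rewrite ln_mult by lra. fold L l.
  replace (L + l) with (L * (1 + r)) by (unfold r; field; lra).
  rewrite ln_mult by lra. fold Lam.
  eapply Rle_trans; [apply (inv_add_ln_1p_le Lam r (2 * k)); lra|].
  assert (Hr1 : - r <= (- u + u^2 * (1/2 + k)) / L).
  { unfold r. replace (- (l / L)) with ((- l) / L) by (field; lra). unfold Rdiv.
    apply Rmult_le_compat_r; [left; apply Rinv_0_lt_compat|]; lra. }
  assert (Hr2 : r^2 <= u^2 * (1 + k)^2 / L^2).
  { unfold r. replace ((l / L)^2) with (l^2 / L^2) by (field; lra).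
    unfold Rdiv. apply Rmult_le_compat_r; [left; apply Rinv_0_lt_compat; nra | exact Hsq]. }
  apply Rle_trans with ((- u + u^2 * (1/2 + k)) / L / Lam^2
    + u^2 * (1 + k)^2 / L^2 * ((1/2 + 2 * k) / Lam^2 + 8 / Lam^3)).
  - replace ((- r + r^2 * (1/2 + 2 * k)) / Lam^2 + 8 * r^2 / Lam^3)
      with ((- r) / Lam^2 + r^2 * ((1/2 + 2 * k) / Lam^2 + 8 / Lam^3)) by (field; lra).
    assert (0 < / Lam^2) by (apply Rinv_0_lt_compat; nra).
    assert (0 < / Lam^3) by (apply Rinv_0_lt_compat; apply pow_lt; lra).
    apply Rplus_le_compat.
    + unfold Rdiv at 1 3. apply Rmult_le_compat_r; lra.
    + apply Rmult_le_compat_r; [|exact Hr2].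
      unfold Rdiv. apply Rplus_le_le_0_compat; apply Rmult_le_pos; lra.
  - right. unfold lnln_quad_coef. field. lra.
Qed.

Lemma sumL_le (l : list Z) (f g : Z -> R) :
  (forall e, In e l -> f e <= g e) -> sumL l f <= sumL l g.
Proof.
  induction l as [|a l IH]; simpl; intros H; [lra|].
  apply Rplus_le_compat; [apply H | apply IH; intros]; auto.
Qed.

Lemma sumL_ext (l : list Z) (f g : Z -> R) :
  (forall e, In e l -> f e = g e) -> sumL l f = sumL l g.
Proof.
  induction l as [|a l IH]; simpl; intros H; [reflexivity|].
  rewrite H, IH; auto.
Qed.

Lemma sumL_add (l : list Z) (f g : Z -> R) :
  sumL l (fun e => f e + g e) = sumL l f + sumL l g.
Proof. induction l as [|a l IH]; simpl; [|rewrite IH]; ring. Qed.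

Lemma sumL_sub (l : list Z) (f g : Z -> R) :
  sumL l (fun e => f e - g e) = sumL l f - sumL l g.
Proof. induction l as [|a l IH]; simpl; [|rewrite IH]; ring. Qed.

Lemma sumL_mulr (l : list Z) (f : Z -> R) (c : R) :
  sumL l (fun e => f e * c) = sumL l f * c.
Proof. induction l as [|a l IH]; simpl; [|rewrite IH]; ring. Qed.

Lemma sumL_nonneg (l : list Z) (f : Z -> R) :
  (forall e, In e l -> 0 <= f e) -> 0 <= sumL l f.
Proof.
  induction l as [|a l IH]; simpl; intros H; [lra|].
  pose proof (H a (or_introl eq_refl)). assert (0 <= sumL l f) by auto. lra.
Qed.

Lemma sumL_ge_term (l : list Z) (f : Z -> R) (e : Z) :
  In e l -> (forall e', In e' l -> 0 <= f e') -> f e <= sumL l f.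
Proof.
  induction l as [|a l IH]; simpl; intros He H; [contradiction|].
  pose proof (H a (or_introl eq_refl)).
  destruct He as [<-|He].
  - assert (0 <= sumL l f) by (apply sumL_nonneg; auto). lra.
  - assert (f e <= sumL l f) by auto. lra.
Qed.

Lemma exists_sumL_abs_bound (l : list Z) :
  exists K, 0 <= K /\ forall e, In e l -> Rabs (IZR e) <= K.
Proof.
  exists (sumL l (fun e => Rabs (IZR e))). split.
  - apply sumL_nonneg. intros; apply Rabs_pos.
  - intros e He. apply (sumL_ge_term l (fun e => Rabs (IZR e))); auto.
    intros; apply Rabs_pos.
Qed.

Section JumpChain.
Variables (Gamma : list Z) (lam : Z -> Z -> R).
Hypothesis lam_nonneg : forall eta x, 0 <= lam eta x.

Definition jump_prob (y e : Z) : R :=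
  if Z.eq_dec e 0 then 0 else lam e y / qrate Gamma lam y.

Lemma qrate_nonneg (y : Z) : 0 <= qrate Gamma lam y.
Proof. apply sumL_nonneg. intros e _. destruct Z.eq_dec; [lra | auto]. Qed.

Lemma jump_prob_nonneg (y e : Z) : 0 <= jump_prob y e.
Proof.
  unfold jump_prob. destruct Z.eq_dec; [lra|].
  destruct (qrate_nonneg y) as [Hq|Hq].
  - apply Rdiv_le_0_compat; auto.
  - rewrite <- Hq. unfold Rdiv. rewrite Rinv_0, Rmult_0_r. lra.
Qed.

Lemma sum_jump_prob (y : Z) :
  sumL Gamma (jump_prob y) = qrate Gamma lam y * / qrate Gamma lam y.
Proof.
  unfold qrate at 1. rewrite <- sumL_mulr. apply sumL_ext. intros e _.
  unfold jump_prob. destruct Z.eq_dec; unfold Rdiv; ring.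
Qed.

Lemma sum_jump_prob_le_1 (y : Z) : sumL Gamma (jump_prob y) <= 1.
Proof.
  rewrite sum_jump_prob. destruct (qrate_nonneg y) as [Hq|Hq].
  - rewrite Rinv_r; lra.
  - rewrite <- Hq. lra.
Qed.

Lemma sum_jump_prob_eq_1 (y : Z) : 0 < qrate Gamma lam y -> sumL Gamma (jump_prob y) = 1.
Proof. intro Hq. rewrite sum_jump_prob. field. lra. Qed.

Lemma hitF_succ (x : Z) (n : nat) (y : Z) :
  hitF Gamma lam x (S n) y =
  sumL Gamma (fun e => jump_prob y e *
    (if Z.eq_dec (y + e) x then 1 else hitF Gamma lam x n (y + e))).
Proof.
  apply sumL_ext. intros e _. unfold jump_prob. destruct Z.eq_dec; [ring | reflexivity].
Qed.

Lemma hitF_bounds (x : Z) (n : nat) (y : Z) : 0 <= hitF Gamma lam x n y <= 1.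
Proof.
  revert y. induction n as [|n IH]; intros y; [simpl; lra|].
  assert (Hh : forall e, 0 <= (if Z.eq_dec (y + e) x then 1 else hitF Gamma lam x n (y + e)) <= 1)
    by (intros e; destruct Z.eq_dec; [lra | apply IH]).
  rewrite hitF_succ. split.
  - apply sumL_nonneg. intros e _.
    apply Rmult_le_pos; [apply jump_prob_nonneg | apply Hh].
  - eapply Rle_trans; [|apply (sum_jump_prob_le_1 y)]. apply sumL_le. intros e _.
    pose proof (jump_prob_nonneg y e). pose proof (Hh e). nra.
Qed.

Lemma hitF_succ_le_miss (x : Z) (n : nat) (w e : Z) : In e Gamma ->
  hitF Gamma lam x (S n) w <=
  1 - jump_prob w e * (1 - (if Z.eq_dec (w + e) x then 1 else hitF Gamma lam x n (w + e))).
Proof.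
  intros He. rewrite hitF_succ.
  set (h := fun e => if Z.eq_dec (w + e) x then 1 else hitF Gamma lam x n (w + e)).
  assert (Hh : forall e, 0 <= h e <= 1)
    by (intros e'; unfold h; destruct Z.eq_dec; [lra | apply hitF_bounds]).
  change (sumL Gamma (fun e => jump_prob w e * h e) <= 1 - jump_prob w e * (1 - h e)).
  replace (sumL Gamma (fun e => jump_prob w e * h e))
    with (sumL Gamma (jump_prob w) - sumL Gamma (fun e => jump_prob w e * (1 - h e)))
    by (rewrite <- sumL_sub; apply sumL_ext; intros; ring).
  assert (jump_prob w e * (1 - h e) <= sumL Gamma (fun e => jump_prob w e * (1 - h e))).
  { apply (sumL_ge_term Gamma (fun e => jump_prob w e * (1 - h e))); auto.
    intros e' _. pose proof (jump_prob_nonneg w e'). pose proof (Hh e'). nra. }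
  pose proof (sum_jump_prob_le_1 w). lra.
Qed.

Definition escapes (x w : Z) : Prop :=
  exists d, 0 < d /\ forall n, hitF Gamma lam x n w <= 1 - d.

Hypothesis lam_Gamma : forall eta x, ~ In eta Gamma -> lam eta x = 0.

Lemma escapes_step (x w e : Z) : e <> 0%Z -> 0 < lam e w -> (w + e)%Z <> x ->
  escapes x (w + e) -> escapes x w.
Proof.
  intros He Hlam Hx [d [Hd Hn]].
  assert (HeG : In e Gamma).
  { apply NNPP. intros HeG. rewrite lam_Gamma in Hlam; auto. lra. }
  assert (Hq : lam e w <= qrate Gamma lam w).
  { pose proof (sumL_ge_term Gamma (fun eta => if Z.eq_dec eta 0 then 0 else lam eta w) e HeG)
      as Hterm.
    simpl in Hterm. destruct Z.eq_dec; [contradiction|]. apply Hterm.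
    intros; destruct Z.eq_dec; auto; lra. }
  assert (Hp : 0 < jump_prob w e)
    by (unfold jump_prob; destruct Z.eq_dec; [contradiction | apply Rdiv_lt_0_compat; lra]).
  assert (Hp1 : jump_prob w e <= 1).
  { eapply Rle_trans; [|apply (sum_jump_prob_le_1 w)].
    apply (sumL_ge_term Gamma (jump_prob w)); auto. intros; apply jump_prob_nonneg. }
  assert (Hd1 : d <= 1) by (pose proof (Hn O); simpl in *; lra).
  exists (d * jump_prob w e). split; [nra|].
  intros [|n]; [simpl; nra|].
  eapply Rle_trans; [apply (hitF_succ_le_miss x n w e HeG)|].
  destruct Z.eq_dec; [contradiction|]. pose proof (Hn n). nra.
Qed.

Lemma escapes_of_reach (x w : Z) : reach lam x w -> escapes x w -> escapes x x.
Proof.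
  induction 1 as [|y eta Hr IH Heta Hlam]; auto.
  intros Hesc. destruct (Z.eq_dec (y + eta) x) as [E|E].
  - rewrite E in Hesc. exact Hesc.
  - apply IH. eapply escapes_step; eauto.
Qed.

Lemma return_prob_lt_1 (x : Z) : escapes x x -> Rbar_lt (return_prob Gamma lam x) 1.
Proof.
  intros [d [Hd Hn]]. unfold return_prob.
  apply Rbar_le_lt_trans with (Finite (1 - d)); [|simpl; lra].
  rewrite <- Lim_seq_const. apply Lim_seq_le_loc. exists O. intros n _. apply Hn.
Qed.

End JumpChain.

Lemma hitF_le_superharmonic (S : Z -> Prop) (Gamma : list Z) (lam : Z -> Z -> R)
  (lam_nonneg : forall eta x, 0 <= lam eta x)
  (lam_S : forall eta x, S x -> ~ S (x + eta)%Z -> lam eta x = 0)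
  (x M : Z) (f : Z -> R) (a : R) :
  (x < M)%Z -> S x -> 0 < a ->
  (forall z, S z -> 0 <= f z) ->
  (forall z, S z -> (z < M)%Z -> a <= f z) ->
  (forall y, S y -> (M <= y)%Z ->
     sumL Gamma (fun e => jump_prob Gamma lam y e * f (y + e)%Z) <= f y) ->
  forall n y, S y -> (M <= y)%Z -> hitF Gamma lam x n y <= f y / a.
Proof.
  intros HxM Hx Ha Hf0 Hfa Hsuper.
  assert (Hfa1 : forall z, S z -> (z < M)%Z -> 1 <= f z / a).
  { intros z Hz HzM. apply (Rmult_le_reg_r a); auto.
    unfold Rdiv. rewrite Rmult_assoc, Rinv_l, Rmult_1_r by lra. pose proof (Hfa z Hz HzM). lra. }
  induction n as [|n IH]; intros y Hy HMy.
  { apply Rdiv_le_0_compat; auto. }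
  rewrite hitF_succ. eapply Rle_trans.
  2:{ unfold Rdiv. apply Rmult_le_compat_r; [left; apply Rinv_0_lt_compat; lra|].
      apply (Hsuper y Hy HMy). }
  rewrite <- sumL_mulr. apply sumL_le. intros e _.
  rewrite Rmult_assoc.
  destruct (Req_dec (jump_prob Gamma lam y e) 0) as [Hp|Hp]; [rewrite Hp, !Rmult_0_l; lra|].
  apply Rmult_le_compat_l; [apply jump_prob_nonneg; auto|].
  assert (HSe : S (y + e)%Z).
  { apply NNPP. intros HSe. apply Hp. unfold jump_prob.
    rewrite (lam_S e y Hy HSe). destruct Z.eq_dec; unfold Rdiv; ring. }
  destruct Z.eq_dec as [E|E]; [rewrite E; apply Hfa1; auto|].
  destruct (Z_lt_le_dec (y + e) M) as [HeM|HeM].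
  - pose proof (hitF_bounds Gamma lam lam_nonneg x n (y + e)). pose proof (Hfa1 _ HSe HeM). lra.
  - apply IH; auto.
Qed.

(* Multiplying the generator applied to [1 / ln ln] at [Y] by [Y^2 (ln Y)^2 (ln ln Y)^2], the
   expansion [inv_lnln_mul_1p_le] together with [H1 >= c] bounds it by [v] times the left-hand side
   of the last inequality minus [c]; here [K] bounds the jump sizes. *)
Definition lnln_regime (K c Y : R) : Prop :=
  0 < Y /\ 1 <= ln Y /\ 1 <= ln (ln Y) /\ K / Y <= 1/8 /\
  2 * (K / Y) * ln Y + (1 + 4 * (K / Y)) * (1 + K / Y)^2 + 16 * (1 + K / Y)^2 / ln (ln Y) <= c.

Lemma generator_inv_lnln_nonpos (Gamma : list Z) (lam : Z -> Z -> R) (K c : R) (y : Z) :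
  (forall eta x, 0 <= lam eta x) ->
  (forall e, In e Gamma -> Rabs (IZR e) <= K) -> 0 <= K ->
  lnln_regime K c (IZR y) -> 0 < halfvar Gamma lam y -> c <= H1 Gamma lam y ->
  sumL Gamma (fun e => lam e y * (/ ln (ln (IZR y + IZR e)) - / ln (ln (IZR y)))) <= 0.
Proof.
  intros lam_nonneg HK HK0 [HY [HL [HLam [Hk Hc]]]] Hv HH.
  set (Y := IZR y) in *. set (L := ln Y) in *. set (Lam := ln L) in *. set (k := K / Y) in *.
  assert (Hk0 : 0 <= k) by (apply Rdiv_le_0_compat; lra).
  set (B := lnln_quad_coef L Lam k).
  eapply Rle_trans.
  { apply sumL_le with (g := fun e => lam e y * (- (IZR e / Y) / (L * Lam^2) + (IZR e / Y)^2 * B)).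
    intros e He. apply Rmult_le_compat_l; auto.
    replace (Y + IZR e) with (Y * (1 + IZR e / Y)) by (field; lra).
    apply inv_lnln_mul_1p_le; [exact HY | exact HL | exact HLam | lra |].
    apply Rabs_le_between. unfold Rdiv. rewrite Rabs_mult, Rabs_inv, (Rabs_right Y) by lra.
    apply Rmult_le_compat_r; [left; apply Rinv_0_lt_compat|]; auto. }
  rewrite (sumL_ext Gamma _
    (fun e => IZR e * lam e y * (- / (Y * L * Lam^2)) + IZR e ^ 2 * lam e y * (B / Y^2)))
    by (intros e _; field; lra).
  rewrite sumL_add, !sumL_mulr. fold (drift Gamma lam y).
  replace (sumL Gamma (fun e => IZR e ^ 2 * lam e y)) with (2 * halfvar Gamma lam y)
    by (unfold halfvar; field).
  set (m := drift Gamma lam y) in *. set (v := halfvar Gamma lam y) in *.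
  assert (HmH : c * v <= L * (m * Y - v)).
  { unfold H1 in HH. fold m v Y L in HH.
    apply (Rmult_le_reg_r (/ v)); [apply Rinv_0_lt_compat; lra|].
    replace (c * v * / v) with c by (field; lra). exact HH. }
  assert (Hpos : 0 < Y^2 * L^2 * Lam^2) by (apply Rmult_lt_0_compat; [apply Rmult_lt_0_compat|]; nra).
  apply (Rmult_le_reg_r (Y^2 * L^2 * Lam^2)); [exact Hpos|]. rewrite Rmult_0_l.
  replace ((m * - / (Y * L * Lam ^ 2) + 2 * v * (B / Y ^ 2)) * (Y^2 * L^2 * Lam^2))
    with (- m * Y * L + v * ((1 + 2 * k) * L + (1 + 4 * k) * (1 + k)^2 + 16 * (1 + k)^2 / Lam))
    by (unfold B, lnln_quad_coef, k; field; lra).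
  nra.
Qed.

Lemma ln_le_2_sqrt (Y : R) : 0 < Y -> ln Y <= 2 * sqrt Y.
Proof.
  intro HY. assert (Hs : 0 < sqrt Y) by (apply sqrt_lt_R0; lra).
  rewrite <- (sqrt_sqrt Y) at 1 by lra. rewrite ln_mult by lra.
  pose proof (ln_1p_le (sqrt Y - 1) ltac:(lra)) as Hln.
  replace (1 + (sqrt Y - 1)) with (sqrt Y) in Hln by ring. lra.
Qed.

Lemma lnln_regime_of_large (K d Y : R) : 0 <= K -> 0 < d ->
  exp (exp (Rmax 1 (96 / d))) <= Y -> 30 * K / d + 8 * K <= Y -> (12 * K / d)^2 <= Y ->
  lnln_regime K (1 + d) Y.
Proof.
  intros HK Hd HYA HYk HYs.
  set (A := Rmax 1 (96 / d)) in *.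
  assert (HA1 : 1 <= A) by apply Rmax_l.
  assert (HA2 : 96 / d <= A) by apply Rmax_r.
  assert (HY : 0 < Y) by (pose proof (exp_pos (exp A)); lra).
  assert (HL : exp A <= ln Y) by (rewrite <- (ln_exp (exp A)); apply ln_le; [apply exp_pos | auto]).
  pose proof (exp_ineq1_le A).
  assert (HLam : A <= ln (ln Y)) by (rewrite <- (ln_exp A); apply ln_le; [apply exp_pos | lra]).
  set (L := ln Y) in *. set (Lam := ln L) in *. set (k := K / Y).
  assert (Hk0 : 0 <= k) by (apply Rdiv_le_0_compat; lra).
  assert (HkY : k * Y = K) by (unfold k; field; lra).
  assert (H30 : 0 <= 30 * K / d) by (apply Rdiv_le_0_compat; lra).
  assert (Hkd : k <= d / 30).
  { assert (30 * K <= d * Y) by (assert (30 * K / d * d = 30 * K) by (field; lra); nra). nra. }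
  assert (Hk8 : k <= 1/8) by nra.
  set (s := sqrt Y).
  assert (Hs : 0 < s) by (apply sqrt_lt_R0; lra).
  assert (Hss : s * s = Y) by (apply sqrt_sqrt; lra).
  assert (HLs : L <= 2 * s) by (apply ln_le_2_sqrt; lra).
  assert (Hs12 : 12 * K / d <= s).
  { unfold s. rewrite <- (sqrt_pow2 (12 * K / d)) by (apply Rdiv_le_0_compat; lra).
    apply sqrt_le_1_alt. lra. }
  assert (H2kL : 2 * k * L <= d / 3).
  { assert (12 * K <= d * s) by (assert (12 * K / d * d = 12 * K) by (field; lra); nra).
    assert (k * s * s = K) by nra. nra. }
  assert (HLamd : 32 / Lam <= d / 3).
  { assert (96 <= A * d) by (assert (96 / d * d = 96) by (field; lra); nra).
    apply (Rmult_le_reg_r Lam); [lra|]. unfold Rdiv. rewrite Rmult_assoc, Rinv_l by lra. nra. }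
  assert (Hq1 : (1 + 4 * k) * (1 + k)^2 <= 1 + 10 * k) by nra.
  assert (Hq2 : 16 * (1 + k)^2 / Lam <= 32 / Lam).
  { unfold Rdiv. apply Rmult_le_compat_r; [left; apply Rinv_0_lt_compat; lra | nra]. }
  unfold lnln_regime. fold L Lam k. repeat split; lra.
Qed.

Lemma lnln_regime_eventually (K c : R) : 0 <= K -> 1 < c ->
  exists Y0, forall Y, Y0 <= Y -> lnln_regime K c Y.
Proof.
  intros HK Hc. set (d := c - 1).
  exists (Rmax (exp (exp (Rmax 1 (96 / d)))) (Rmax (30 * K / d + 8 * K) ((12 * K / d)^2))).
  intros Y HY. replace c with (1 + d) by (unfold d; ring).
  pose proof (Rmax_l (exp (exp (Rmax 1 (96 / d)))) (Rmax (30 * K / d + 8 * K) ((12 * K / d)^2))).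
  pose proof (Rmax_r (exp (exp (Rmax 1 (96 / d)))) (Rmax (30 * K / d + 8 * K) ((12 * K / d)^2))).
  pose proof (Rmax_l (30 * K / d + 8 * K) ((12 * K / d)^2)).
  pose proof (Rmax_r (30 * K / d + 8 * K) ((12 * K / d)^2)).
  apply lnln_regime_of_large; unfold d in *; lra.
Qed.

Lemma ln_ln_le (a b : R) : 0 < a -> 0 < ln a -> a <= b -> ln (ln a) <= ln (ln b).
Proof. intros Ha HLa Hab. apply ln_le; [exact HLa|]. apply ln_le; lra. Qed.

Lemma ln_ln_lt (a b : R) : 0 < a -> 0 < ln a -> a < b -> ln (ln a) < ln (ln b).
Proof.
  intros Ha HLa Hab. apply ln_increasing; [exact HLa|]. apply ln_increasing; lra.
Qed.

Section Lyapunov.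
Variable Y0 : R.
Hypotheses (HY0 : 0 < Y0) (HLY0 : 0 < ln Y0) (HLLY0 : 0 < ln (ln Y0)).

(* Frozen below [Y0], so that it is positive and nonincreasing on all of [Z]. *)
Definition lyap (z : Z) : R := / ln (ln (Rmax Y0 (IZR z))).

Lemma lyap_eq (z : Z) : Y0 <= IZR z -> lyap z = / ln (ln (IZR z)).
Proof. intro Hz. unfold lyap. rewrite Rmax_right by exact Hz. reflexivity. Qed.

Lemma lnln_Rmax_ge (z : Z) : ln (ln Y0) <= ln (ln (Rmax Y0 (IZR z))).
Proof. apply ln_ln_le; auto using Rmax_l. Qed.

Lemma lyap_pos (z : Z) : 0 < lyap z.
Proof. apply Rinv_0_lt_compat. pose proof (lnln_Rmax_ge z). lra. Qed.

Lemma lyap_antimono (z1 z2 : Z) : (z1 <= z2)%Z -> lyap z2 <= lyap z1.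
Proof.
  intros Hz. apply IZR_le in Hz. pose proof (lnln_Rmax_ge z1).
  assert (HL1 : ln Y0 <= ln (Rmax Y0 (IZR z1))) by (apply ln_le; auto using Rmax_l).
  apply Rinv_le_contravar; [lra|].
  apply ln_ln_le; [pose proof (Rmax_l Y0 (IZR z1)); lra | lra | apply Rle_max_compat_l; exact Hz].
Qed.

Lemma lyap_lt (z1 z2 : Z) : Y0 <= IZR z1 -> (z1 < z2)%Z -> lyap z2 < lyap z1.
Proof.
  intros H1 Hz. apply IZR_lt in Hz. rewrite !lyap_eq by lra.
  assert (HL1 : ln Y0 <= ln (IZR z1)) by (apply ln_le; auto).
  pose proof (ln_ln_le Y0 (IZR z1) HY0 HLY0 H1).
  pose proof (ln_ln_lt (IZR z1) (IZR z2) ltac:(lra) ltac:(lra) Hz).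
  apply Rinv_lt_contravar; [apply Rmult_lt_0_compat|]; lra.
Qed.

End Lyapunov.

Lemma qrate_pos (Gamma : list Z) (lam : Z -> Z -> R) (K : R) (y : Z) :
  (forall eta x, 0 <= lam eta x) -> (forall e, In e Gamma -> Rabs (IZR e) <= K) ->
  0 < halfvar Gamma lam y -> 0 < qrate Gamma lam y.
Proof.
  intros lam_nonneg HK Hv.
  assert (Hvq : 2 * halfvar Gamma lam y <= K^2 * qrate Gamma lam y).
  { unfold halfvar, qrate.
    replace (2 * (/ 2 * sumL Gamma (fun eta => IZR eta ^ 2 * lam eta y)))
      with (sumL Gamma (fun eta => IZR eta ^ 2 * lam eta y)) by field.
    rewrite (Rmult_comm (K^2)), <- sumL_mulr.
    apply sumL_le. intros e He. destruct Z.eq_dec as [->|_]; [simpl; lra|].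
    pose proof (lam_nonneg e y).
    assert (IZR e ^ 2 <= K^2) by (rewrite <- pow2_abs; pose proof (HK e He);
      pose proof (Rabs_pos (IZR e)); nra).
    nra. }
  destruct (qrate_nonneg Gamma lam lam_nonneg y) as [Hq|Hq]; [exact Hq|].
  rewrite <- Hq in Hvq. lra.
Qed.

Lemma lyap_superharmonic (Gamma : list Z) (lam : Z -> Z -> R) (K c Y0 : R) (y : Z) :
  (forall eta x, 0 <= lam eta x) ->
  (forall e, In e Gamma -> Rabs (IZR e) <= K) -> 0 <= K ->
  (forall Y, Y0 <= Y -> lnln_regime K c Y) ->
  Y0 + K <= IZR y -> 0 < halfvar Gamma lam y -> c <= H1 Gamma lam y ->
  sumL Gamma (fun e => jump_prob Gamma lam y e * lyap Y0 (y + e)) <= lyap Y0 y.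
Proof.
  intros lam_nonneg HK HK0 Hreg Hy Hv HH.
  pose proof (qrate_pos Gamma lam K y lam_nonneg HK Hv) as Hq.
  assert (Hdiff : sumL Gamma (fun e => jump_prob Gamma lam y e * lyap Y0 (y + e))
                  - sumL Gamma (fun e => jump_prob Gamma lam y e * lyap Y0 y)
     = sumL Gamma (fun e => lam e y * (/ ln (ln (IZR y + IZR e)) - / ln (ln (IZR y))))
       * / qrate Gamma lam y).
  { rewrite <- sumL_sub, <- sumL_mulr. apply sumL_ext. intros e He.
    unfold jump_prob. destruct Z.eq_dec as [->|_].
    - rewrite Rplus_0_r. ring.
    - assert (Y0 <= IZR (y + e)).
      { rewrite plus_IZR. pose proof (HK e He). pose proof (Rle_abs (- IZR e)).
        rewrite Rabs_Ropp in *. lra. }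
      rewrite !lyap_eq, plus_IZR by lra. unfold Rdiv. ring. }
  rewrite sumL_mulr, sum_jump_prob_eq_1 in Hdiff by auto.
  pose proof (generator_inv_lnln_nonpos Gamma lam K c y lam_nonneg HK HK0
    (Hreg (IZR y) ltac:(lra)) Hv HH).
  assert (0 < / qrate Gamma lam y) by (apply Rinv_0_lt_compat; lra).
  nra.
Qed.

Theorem mainTheorem9
  (S : Z -> Prop) (Gamma : list Z) (lam : Z -> Z -> R)
  (hS_nonneg : forall x, S x -> (0 <= x)%Z)
  (hS_inf : forall N : Z, exists x, S x /\ (N <= x)%Z)
  (hGamma_nodup : NoDup Gamma)
  (hGamma : forall eta x, ~ In eta Gamma -> lam eta x = 0)
  (hlam_nonneg : forall eta x, 0 <= lam eta x)
  (hlam_S : forall eta x, S x -> ~ S (x + eta)%Z -> lam eta x = 0)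
  (hv_pos : forall x, S x -> 0 < halfvar Gamma lam x)
  (hirr : irreducible S lam)
  (hliminf : exists c, 1 < c /\ exists N : Z,
      forall x, S x -> (N <= x)%Z -> c <= H1 Gamma lam x) :
  transient S Gamma lam.
Proof.
  intros x Hx.
  destruct hliminf as [c [Hc [N HN]]].
  destruct (exists_sumL_abs_bound Gamma) as [K [HK0 HK]].
  destruct (lnln_regime_eventually K c HK0 Hc) as [Y1 HY1].
  pose proof (Rmax_l (IZR N) Y1). pose proof (Rmax_r (IZR N) Y1).
  set (Y0 := Rmax (IZR N) Y1) in *.
  assert (Hreg : forall Y, Y0 <= Y -> lnln_regime K c Y) by (intros; apply HY1; lra).
  destruct (Hreg Y0 (Rle_refl _)) as [HY0 [HL0 [HLL0 _]]].
  set (M := Z.max (up (Y0 + K)) (x + 1)).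
  assert (HM : Y0 + K <= IZR M).
  { pose proof (proj1 (archimed (Y0 + K))).
    assert (IZR (up (Y0 + K)) <= IZR M) by (apply IZR_le; unfold M; lia). lra. }
  assert (Hhit : forall n y, S y -> (M <= y)%Z ->
                   hitF Gamma lam x n y <= lyap Y0 y / lyap Y0 M).
  { apply (hitF_le_superharmonic S Gamma lam hlam_nonneg hlam_S);
      [unfold M; lia | exact Hx | apply lyap_pos; lra
      | intros; left; apply lyap_pos; lra | intros; apply lyap_antimono; lra || lia |].
    intros y Hy HMy. apply IZR_le in HMy.
    apply (lyap_superharmonic Gamma lam K c); auto; [lra|].
    apply HN; [exact Hy | apply le_IZR; lra]. }
  destruct (hS_inf (M + 1)%Z) as [y1 [Hy1 HMy1]].
  apply return_prob_lt_1, (escapes_of_reach Gamma lam hlam_nonneg hGamma x y1);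
    [apply hirr; auto|].
  assert (Hlt : lyap Y0 y1 < lyap Y0 M) by (apply lyap_lt; [lra | lra | lra | lra | lia]).
  pose proof (lyap_pos Y0 HY0 ltac:(lra) ltac:(lra) M).
  exists ((lyap Y0 M - lyap Y0 y1) / lyap Y0 M). split; [apply Rdiv_lt_0_compat; lra|].
  intros n. replace (1 - (lyap Y0 M - lyap Y0 y1) / lyap Y0 M) with (lyap Y0 y1 / lyap Y0 M)
    by (field; lra).
  apply Hhit; [exact Hy1 | lia].
Qed.
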